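(* Let $G$ be a finite $p$-group and let $C_1, C_2,\ldots,C_p$ be proper subgroups of $G$ such that $C_1\neq C_2$ and $|G:C_1|=|G:C_2|=p$. Then there exists a normal subgroup $C$ of $G$ such that $|G:C|=p$, $C\cap C_1=C\cap C_2=C_1\cap C_2$, and $C\not\subseteq C_i$ for all $1\leq i\leq p$. *)

From mathcomp Require Import all_boot all_fingroup all_solvable.

From mathcomp Require Import all_boot all_fingroup all_solvable.
From mathcomp Require Import zify.

(* Let N = C1 :&: C2, a normal subgroup of index p^2.  For g outside C1 :|: C2
   the subgroup D_g = N <*> <[g]> has index p and meets both C1 and C2 exactly
   in N, because an element n * g ^+ k of D_g lies in C1 iff p %| k iff it lies
   in C2.  Being maximal, D_g can only be contained in some C_i if D_g = C_i,
   which rules out i = 1, 2 since g \in D_g.  Each D_g contains (p - 1) * |N| of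
   the (p - 1)^2 * |N| elements outside C1 :|: C2, so at least p - 1 distinct
   subgroups D_g arise, and one of them is none of C3, ..., Cp. *)

Section NormalIndex.

Context {gT : finGroupType}.
Implicit Types G H M A : {group gT}.
Local Open Scope group_scope.

Lemma indexg_normal_maximal {G M A} :
  M <| G -> maximal M G -> A \subset G -> ~~ (A \subset M) ->
  #|A : M| = #|G : M|.
Proof.
move=> nMG maxM sAG not_sAM.
by rewrite -(mulg_normal_maximal nMG maxM sAG not_sAM) indexMg.
Qed.

Lemma mem_expg_index_prime {G H} {g : gT} {k : nat} :
  H <| G -> prime #|G : H| -> g \in G -> g \notin H ->
  (g ^+ k \in H) = (#|G : H| %| k)%N.
Proof.
move=> nHG prHG Gg notHg.
have Ng : g \in 'N(H) := subsetP (normal_norm nHG) g Gg.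
have order_coset : #[coset H g] = #|G : H|.
  have /primeP[_ dvd_prime] := prHG.
  have := order_dvdG (mem_quotient H Gg).
  rewrite card_quotient ?normal_norm // => /dvd_prime /orP[|/eqP //].
  by rewrite order_eq1 => /eqP/(coset_idr Ng); rewrite (negPf notHg).
rewrite -order_coset order_dvdn -morphX //.
by apply/idP/eqP => [/coset_id | /coset_idr]; last apply; rewrite ?groupX.
Qed.

Lemma p_index_normal p G H :
  prime p -> p.-group G -> H \subset G -> #|G : H| = p -> H <| G.
Proof.
move=> p_pr pG sHG iHG; apply: (p_maximal_normal pG).
by apply: p_index_maximal; rewrite ?iHG.
Qed.

End NormalIndex.

Section TwoNormalPrimeIndex.

Local Open Scope group_scope.

Context {gT : finGroupType} {p : nat} {G H K : {group gT}}.
Hypotheses (p_pr : prime p) (nHG : H <| G) (nKG : K <| G).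
Hypotheses (iHG : #|G : H| = p) (iKG : #|G : K| = p).
Hypothesis neHK : H != K :> {set gT}.

Local Notation N := (H :&: K).
Local Notation S := (G :\: (H :|: K)).

Let p_gt0 : (0 < p)%N := prime_gt0 p_pr.
Let sHG : H \subset G := normal_sub nHG.
Let sKG : K \subset G := normal_sub nKG.

Let maxH : maximal H G. Proof. by apply: p_index_maximal; rewrite ?iHG. Qed.
Let maxK : maximal K G. Proof. by apply: p_index_maximal; rewrite ?iKG. Qed.

Let card_HK : #|H| = #|K|.
Proof. by apply/eqP; rewrite -(eqn_pmul2r p_gt0) -{1}iHG -iKG !Lagrange. Qed.

Lemma index_meetl : #|H : N| = p.
Proof.
have not_sHK : ~~ (H \subset K).
  by apply: contra neHK => sHK; rewrite eqEcard sHK card_HK leqnn.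
by rewrite indexgI (indexg_normal_maximal nKG maxK sHG not_sHK).
Qed.

Lemma index_meetr : #|K : N| = p.
Proof.
have not_sKH : ~~ (K \subset H).
  by apply: contra neHK => sKH; rewrite eq_sym eqEcard sKH card_HK leqnn.
by rewrite setIC indexgI (indexg_normal_maximal nHG maxH sKG not_sKH).
Qed.

Lemma index_meet : #|G : N| = (p ^ 2)%N.
Proof. by rewrite -(Lagrange_index sKG (subsetIr H K)) iKG index_meetr. Qed.

Lemma card_outside_union : #|S| = (p.-1 ^ 2 * #|N|)%N.
Proof.
have := Lagrange (subsetIl H K); have := Lagrange (subsetIr H K).
have := Lagrange (subset_trans (subsetIl H K) sHG).
rewrite index_meetl index_meetr index_meet /= => cardG cardK cardH.
rewrite cardsD (setIidPr _) ?subUset ?sHG // cardsU -cardG -cardH -cardK.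
have /= := cardG_gt0 (H :&: K)%G; nia.
Qed.

Section JoinCycle.

Context {g : gT}.
Hypothesis Sg : g \in S.

Let Gg : g \in G. Proof. by case/setDP: Sg. Qed.
Let notHg : g \notin H.
Proof. by case/setDP: Sg => _; apply: contra => Hg; rewrite inE Hg. Qed.
Let notKg : g \notin K.
Proof. by case/setDP: Sg => _; apply: contra => Kg; rewrite inE Kg orbT. Qed.
Let nNG : N <| G := normalI nHG nKG.

Lemma mem_join_cycle : g \in N <*> <[g]>.
Proof. exact: subsetP (joing_subr _ _) g (cycle_id g). Qed.

Lemma join_cycle_sub : N <*> <[g]> \subset G.
Proof. by rewrite join_subG cycle_subG Gg (subset_trans (subsetIl H K)). Qed.

(* For x = n * g ^+ k with n \in N, both x \in H and x \in K mean p %| k. *)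
Lemma mem_join_cycle_meet x : x \in N <*> <[g]> -> (x \in H) = (x \in K).
Proof.
rewrite norm_joinEr; last by rewrite cycle_subG (subsetP (normal_norm nNG)).
case/mulsgP=> n _ /setIP[Hn Kn] /cycleP[k ->] ->.
rewrite (groupMl _ Hn) (groupMl _ Kn).
by rewrite (mem_expg_index_prime nHG) ?(mem_expg_index_prime nKG) ?iHG ?iKG.
Qed.

Lemma join_cycle_meetlr : (N <*> <[g]>) :&: H = (N <*> <[g]>) :&: K.
Proof.
apply/setP=> x; rewrite !inE.
by case Dx: (x \in _) => //=; apply: mem_join_cycle_meet.
Qed.

Lemma join_cycle_meetl : (N <*> <[g]>) :&: H = N.
Proof.
rewrite -[LHS]setIid {2}join_cycle_meetlr setIACA setIid.
exact/setIidPr/joing_subl.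
Qed.

Lemma join_cycle_meetr : (N <*> <[g]>) :&: K = N.
Proof. by rewrite -join_cycle_meetlr join_cycle_meetl. Qed.

Lemma index_join_cycle_meet : #|N <*> <[g]> : N| = p.
Proof.
have not_sDH : ~~ (N <*> <[g]> \subset H).
  by apply: contra notHg => /subsetP; apply; apply: mem_join_cycle.
have := indexgI (N <*> <[g]>)%G H; rewrite join_cycle_meetl => ->.
by rewrite -iHG (indexg_normal_maximal nHG maxH join_cycle_sub not_sDH).
Qed.

Lemma index_join_cycle : #|G : N <*> <[g]>| = p.
Proof.
apply/eqP; rewrite -(eqn_pmul2r p_gt0) -{1}index_join_cycle_meet mulnn.
by rewrite Lagrange_index ?join_cycle_sub ?joing_subl // index_meet.
Qed.

Lemma card_join_cycle_outside : #|(N <*> <[g]>) :&: S| = (p.-1 * #|N|)%N.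
Proof.
rewrite setIDA (setIidPl join_cycle_sub) cardsD setIUr join_cycle_meetl.
rewrite join_cycle_meetr setUid -(Lagrange (joing_subl N <[g]>)).
by rewrite index_join_cycle_meet /= [RHS]mulnC -subn1 mulnBr muln1.
Qed.

End JoinCycle.

Lemma leq_card_join_cycles : (p.-1 <= #|[set N <*> <[g]> | g in S]|)%N.
Proof.
set Ds := [set _ | g in S]; set Ps := [set X :&: S | X in Ds].
have sSPs : S \subset cover Ps.
  apply/subsetP=> g Sg; apply/bigcupP; exists ((N <*> <[g]>) :&: S).
    by apply/imsetP; exists (N <*> <[g]>) => //; apply/imsetP; exists g.
  by rewrite inE mem_join_cycle.
have sum_Ps : (\sum_(A in Ps) #|A| = #|Ps| * (p.-1 * #|N|))%N.
  rewrite -sum_nat_const; apply: eq_bigr => _ /imsetP[_ /imsetP[g Sg ->] ->].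
  exact: card_join_cycle_outside.
have := leq_trans (subset_leq_card sSPs) (leq_card_cover Ps).
rewrite sum_Ps card_outside_union -mulnn -mulnA leq_pmul2r.
  by move/leq_trans; apply; apply: leq_imset_card.
have /= := cardG_gt0 (H :&: K)%G; have := prime_gt1 p_pr; nia.
Qed.

Lemma exists_join_cycle_notin (F : {set {set gT}}) :
  (#|F| < p.-1)%N -> exists2 g, g \in S & N <*> <[g]> \notin F.
Proof.
move=> ltFp; have /subsetPn[_ /imsetP[g Sg ->] notFD] :
    ~~ ([set N <*> <[g]> | g in S] \subset F).
  apply: contraTN ltFp => /subset_leq_card le_DF.
  by rewrite -leqNgt (leq_trans leq_card_join_cycles le_DF).
by exists g.
Qed.

End TwoNormalPrimeIndex.

Theorem lemma4 (p : nat) (gT : finGroupType) (G : {group gT})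
    (C : nat -> {group gT}) :
  prime p -> (p.-group G)%g ->
  (forall i, 1 <= i <= p -> C i \proper G) ->
  C 1 != C 2 :> {set gT} ->
  #|G : C 1%N|%g = p -> #|G : C 2%N|%g = p ->
  exists D : {group gT},
    [/\ (D <| G)%g, #|G : D|%g = p,
        D :&: C 1 = C 1 :&: C 2, D :&: C 2 = C 1 :&: C 2 &
        forall i, 1 <= i <= p -> ~~ (D \subset C i)].
Proof.
move=> p_pr pG properC neC12 iC1 iC2.
have sCG i : 1 <= i <= p -> C i \subset G by move/properC/proper_sub.
have nC1 : (C 1%N <| G)%g.
  by apply: p_index_normal pG _ iC1; rewrite ?sCG ?(prime_gt0 p_pr).
have nC2 : (C 2%N <| G)%g.
  by apply: p_index_normal pG _ iC2; rewrite ?sCG ?(prime_gt1 p_pr).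
set F := [set (C i.+3 : {set gT}) | i : 'I_(p - 2)].
have ltFp : #|F| < p.-1.
  apply: leq_ltn_trans (leq_imset_card _ _) _.
  by rewrite card_ord -subn1; have := prime_gt1 p_pr; lia.
have [g Sg notFD] := exists_join_cycle_notin p_pr nC1 nC2 iC1 iC2 neC12 F ltFp.
have iD := index_join_cycle p_pr nC1 nC2 iC1 iC2 neC12 Sg.
have maxD : maximal (joing_group (C 1 :&: C 2) <[g]>%g) G.
  by apply: p_index_maximal; rewrite ?iD ?join_cycle_sub.
exists (joing_group (C 1 :&: C 2) <[g]>%g); split.
- exact: p_maximal_normal pG maxD.
- exact: iD.
- exact: (join_cycle_meetl p_pr nC1 nC2 iC1 iC2 Sg).
- exact: (join_cycle_meetr p_pr nC1 nC2 iC1 iC2 Sg).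
move=> i ip; apply/negP=> sDC.
have eqCD := (maxgroupP maxD).2 (C i) (properC i ip) sDC.
have Cg : g \in C i by rewrite eqCD mem_join_cycle.
move: Sg; rewrite !inE => /andP[/norP[notC1g notC2g] _].
case: i ip eqCD Cg {sDC} => [|[|[|i]]] //= ip eqCD Cg.
- by rewrite Cg in notC1g.
- by rewrite Cg in notC2g.
have lt_i : i < p - 2 by rewrite ltn_subRL add2n.
by case/negP: notFD; rewrite -eqCD; apply/imsetP; exists (Ordinal lt_i).
Qed.
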